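(* Let $L:\mathbb{R}^k\times\mathcal{Y}\to\mathbb{R}_+$ be a polyhedral loss, and let $\mathcal{C}$ be a collection of polyhedral subsets of $\mathbb{R}^k$ such that for every $y\in\mathcal{Y}$, $L(\cdot,y)$ is affine on each $C\in\mathcal{C}$. Let $R=\bigcup\mathcal{C}$. Then for every $p\in\Delta_\mathcal{Y}$, $\arg\min_{u\in\mathbb{R}^k}L(u;p)\cap R=\bigcup\mathcal{F}$ for some family $\mathcal{F}$ of faces of members of $\mathcal{C}$.
   Context: $\mathcal{Y}$ is a finite label set (in the paper $\{-1,1\}^k$) and $\Delta_\mathcal{Y}$ the probability distributions on it; $L(u;p)=\sum_yp_yL(u,y)$. A loss is polyhedral if each $L(\cdot,y)$ is convex and piecewise linear (a maximum of finitely many affine functions). *)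

From HB Require Import structures.
From mathcomp Require Import all_boot all_order all_algebra.
From mathcomp Require Import classical_sets reals.
Set Implicit Arguments. Unset Strict Implicit. Unset Printing Implicit Defensive.
Import Order.TTheory GRing.Theory Num.Theory.
Local Open Scope ring_scope.
Local Open Scope classical_set_scope.

Section Defs.
Variable R : realType.

Definition dotv (k : nat) (a u : 'rV[R]_k) : R := \sum_(i < k) a ord0 i * u ord0 i.

Definition polyhedral (k : nat) (C : set 'rV[R]_k) : Prop :=
  exists (n : nat) (A : 'I_n -> 'rV[R]_k) (b : 'I_n -> R),
    C = [set u | forall i, dotv (A i) u <= b i].

(* F is a face of the polyhedron C: the intersection of C with the boundary
   hyperplane of a valid inequality (a = 0, b = 0 gives C, a = 0, b = 1 gives the empty face) *)
Definition face (k : nat) (C F : set 'rV[R]_k) : Prop :=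
  exists (a : 'rV[R]_k) (b : R),
    (forall u, C u -> dotv a u <= b) /\
    F = [set u | C u /\ dotv a u = b].

Definition max_of_affine (k : nat) (f : 'rV[R]_k -> R) : Prop :=
  exists (n : nat) (a : 'I_n.+1 -> 'rV[R]_k) (b : 'I_n.+1 -> R),
    forall u, (forall i, dotv (a i) u + b i <= f u) /\
              (exists i, f u = dotv (a i) u + b i).

Definition polyhedral_loss (k : nat) (Y : finType) (L : 'rV[R]_k -> Y -> R) : Prop :=
  forall y, max_of_affine (fun u => L u y).

Definition affine_on (k : nat) (f : 'rV[R]_k -> R) (C : set 'rV[R]_k) : Prop :=
  exists (a : 'rV[R]_k) (b : R), forall u, C u -> f u = dotv a u + b.

Definition is_distr (Y : finType) (p : Y -> R) : Prop :=
  (forall y, 0 <= p y) /\ \sum_(y : Y) p y = 1.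

Definition exp_loss (k : nat) (Y : finType) (L : 'rV[R]_k -> Y -> R) (p : Y -> R)
  (u : 'rV[R]_k) : R := \sum_(y : Y) p y * L u y.

Definition argmin (k : nat) (f : 'rV[R]_k -> R) : set 'rV[R]_k :=
  [set u | forall v, f u <= f v].

End Defs.

From HB Require Import structures.
From mathcomp Require Import all_boot all_order all_algebra.
From mathcomp Require Import classical_sets reals.
From mathcomp Require Import boolp lra.
Import Order.TTheory GRing.Theory Num.Theory.
Local Open Scope ring_scope.
Local Open Scope classical_set_scope.

(* If [f] is affine on [C] and attains its minimum at [u0 \in C], then
   [argmin f `&` C] is the face of [C] cut out by the valid inequality
   [f >= f u0], which is linear on [C].  Since the expected loss is a convex
   combination of the [L(., y)], it is affine on every member of [CC], so
   [argmin L(.; p) `&` \bigcup CC] is the union of these faces. *)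

Section Dotv.
Variables (R : realType) (k : nat).
Implicit Types (a u : 'rV[R]_k).

Lemma dotv0 u : dotv 0 u = 0.
Proof. by rewrite /dotv big1 // => i _; rewrite mxE mul0r. Qed.

Lemma dotvN a u : dotv (- a) u = - dotv a u.
Proof. by rewrite /dotv -sumrN; apply: eq_bigr => i _; rewrite mxE mulNr. Qed.

Lemma dotv_sumZ (Y : finType) (c : Y -> R) (a : Y -> 'rV[R]_k) u :
  dotv (\sum_y c y *: a y) u = \sum_y c y * dotv (a y) u.
Proof.
rewrite /dotv.
under eq_bigr => i _ do rewrite summxE big_distrl /=.
rewrite exchange_big /=; apply: eq_bigr => y _.
rewrite big_distrr /=; apply: eq_bigr => i _.
by rewrite mxE mulrA.
Qed.

End Dotv.

Section AffineArgmin.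
Variables (R : realType) (k : nat).
Implicit Types (C : set 'rV[R]_k) (f : 'rV[R]_k -> R).

Lemma face_set0 C : face C set0.
Proof.
exists 0, 1; split=> [u _|]; first by rewrite dotv0 ler01.
apply/seteqP; split=> u //= [_]; rewrite dotv0 => /eqP.
by rewrite eq_sym oner_eq0.
Qed.

Lemma affine_on_sum (Y : finType) (c : Y -> R) (g : Y -> 'rV[R]_k -> R) C :
  (forall y, affine_on (g y) C) ->
  affine_on (fun u => \sum_y c y * g y u) C.
Proof.
move=> gaff; have /fin_all_exists [ab gE] : forall y, exists ab : 'rV[R]_k * R,
    forall u, C u -> g y u = dotv ab.1 u + ab.2.
  by move=> y; have [a [b gyE]] := gaff y; exists (a, b).
exists (\sum_y c y *: (ab y).1), (\sum_y c y * (ab y).2) => u Cu.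
rewrite dotv_sumZ -big_split /=; apply: eq_bigr => y _.
by rewrite (gE y u Cu) mulrDr.
Qed.

Lemma affine_on_argmin_face f C :
  affine_on f C -> face C (argmin f `&` C).
Proof.
move=> [a [b fE]].
have [[u0 [u0min Cu0]]|noneC] := pselect (exists u, argmin f u /\ C u);
  last first.
  rewrite (_ : _ `&` _ = set0); first exact: face_set0.
  by apply/seteqP; split=> u //= Mu; apply: noneC; exists u.
exists (- a), (b - f u0); split=> [u Cu|].
  by have := u0min u; rewrite dotvN (fE u Cu); lra.
apply/seteqP; split=> u /= [].
  move=> umin Cu; split=> //.
  by have := umin u0; have := u0min u; rewrite dotvN (fE u Cu); lra.
move=> Cu; rewrite dotvN => uE; split=> // v.
by have -> : f u = f u0 by rewrite (fE u Cu); lra.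
Qed.

End AffineArgmin.

Theorem lemma4 (R : realType) (k : nat) (Y : finType)
  (L : 'rV[R]_k -> Y -> R)
  (Lnonneg : forall u y, 0 <= L u y)
  (Lpoly : polyhedral_loss L)
  (CC : set (set 'rV[R]_k))
  (CCpoly : forall C, CC C -> polyhedral C)
  (CCaff : forall y C, CC C -> affine_on (fun u => L u y) C) :
  forall p : Y -> R, is_distr p ->
    exists FF : set (set 'rV[R]_k),
      (forall F, FF F -> exists2 C, CC C & face C F) /\
      argmin (exp_loss L p) `&` (\bigcup_(C in CC) C) = \bigcup_(F in FF) F.
Proof.
move=> p _.
exists [set argmin (exp_loss L p) `&` C | C in CC]; split.
  move=> _ [C CCC <-]; exists C => //.
  by apply: affine_on_argmin_face; apply: affine_on_sum => y; exact: CCaff.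
by rewrite setI_bigcupr bigcup_image.
Qed.
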